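(* In every run of the algorithm described in the context in which at most $t$ processes crash, if a process does not crash during an invocation of $\mathsf{read}()$, then this invocation terminates.
   Context: Model. There are $n$ asynchronous processes $p_1,\dots,p_n$, of which up to $t<n/2$ may crash; a process runs its algorithm correctly until it crashes, and a process that never crashes is correct. Each ordered pair of processes is linked by a reliable (no loss, corruption, duplication or creation; every message sent to a correct process is eventually received), asynchronous, not necessarily FIFO channel. $p_w$ is the single writer, invoking writes sequentially; $v_0$ is the initial value. Each process invokes its operations sequentially. Messages: $\textsc{write}(b,v)$ with $b\in\{0,1\}$, which stands for the two types $\textsc{write0}(v)$ and $\textsc{write1}(v)$; $\textsc{read}()$; $\textsc{proceed}()$. Variables of $p_i$. These are: $history_i$ with $history_i[0]=v_0$; $w\_sync_i[1..n]$, initially all $0$; $r\_sync_i[1..n]$, initially all $0$. $\mathsf{write}(v)$ by $p_w$: $wsn\gets w\_sync_w[w]+1$; $w\_sync_w[w]\gets wsn$; $history_w[wsn]\gets v$. Send $\textsc{write}(wsn\bmod 2,v)$ to each $p_j$ with $w\_sync_w[j]=wsn-1$. Wait until at least $n-t$ indices $j$ have $w\_sync_w[j]=wsn$. Return. $\mathsf{read}()$ by $p_i$ (the writer may instead directly return $history_w[w\_sync_w[w]]$): $r\_sync_i[i]\gets r\_sync_i[i]+1$ and call the new value $rsn$. Send $\textsc{read}()$ to all $p_j$ with $j\ne i$. Wait until at least $n-t$ indices $j$ have $r\_sync_i[j]=rsn$. Let $sn\gets w\_sync_i[i]$. Wait until at least $n-t$ indices $j$ have $w\_sync_i[j]\ge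 sn$. Return $history_i[sn]$. On receipt of $\textsc{write}(b,v)$ from $p_j$ at $p_i$: Wait until $b=(w\_sync_i[j]+1)\bmod 2$. Let $wsn\gets w\_sync_i[j]+1$. If $wsn=w\_sync_i[i]+1$, then set $w\_sync_i[i]\gets wsn$ and $history_i[wsn]\gets v$, and send $\textsc{write}(wsn\bmod 2,v)$ to each $p_\ell$ with $w\_sync_i[\ell]=wsn-1$. Else, if $wsn<w\_sync_i[i]$, send $\textsc{write}((wsn+1)\bmod 2,history_i[wsn+1])$ to $p_j$. Finally set $w\_sync_i[j]\gets wsn$. On receipt of $\textsc{read}()$ from $p_j$ at $p_i$: Let $sn\gets w\_sync_i[i]$; wait until $w\_sync_i[j]\ge sn$; send $\textsc{proceed}()$ to $p_j$. On receipt of $\textsc{proceed}()$ from $p_j$ at $p_i$: $r\_sync_i[j]\gets r\_sync_i[j]+1$. Message handlers run concurrently; a waiting handler does not block the reception of other messages. *)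

From mathcomp Require Import all_boot.
From Stdlib Require List.

Set Implicit Arguments.
Unset Strict Implicit.
Unset Printing Implicit Defensive.

Section Algo.

Variables (V : Type) (n : nat).

(* Message bodies: WRITE(b,v) (b = 0/1 stored as a nat), READ(), PROCEED(). *)
Inductive body := MWrite of nat & V | MRead | MProceed.

(* A message in transit, with a unique identifier (m_id, m_dst). *)
Record msg := Msg { m_id : nat; m_src : 'I_n; m_dst : 'I_n; m_body : body }.

(* A received message whose handler has not completed yet (it may be waiting).
   For READ() the value sn := w_sync_i[i] is fixed at receipt time. *)
Inductive hkind := HWrite of nat & V | HRead of nat | HProceed.
Record handler := Handler { h_id : nat; h_owner : 'I_n; h_from : 'I_n; h_kind : hkind }.

Inductive opstate :=
  | Idle
  | WWait of nat        (* write(v) waiting, with its wsn *)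
  | RWait1 of nat       (* read() in its first wait, with its rsn *)
  | RWait2 of nat.      (* read() in its second wait, with its sn *)

Record lstate := LState {
  history : nat -> V;
  w_sync : 'I_n -> nat;
  r_sync : 'I_n -> nat;
  op : opstate }.

Record config := Config {
  loc : 'I_n -> lstate;
  crashed : 'I_n -> bool;
  transit : seq msg;
  pending : seq handler;
  fresh : nat }.

Definition upd (A : Type) (f : 'I_n -> A) (i : 'I_n) (x : A) : 'I_n -> A :=
  fun j => if j == i then x else f j.

Definition updh (h : nat -> V) (k : nat) (x : V) : nat -> V :=
  fun l => if l == k then x else h l.

Definition kind_of (ls : lstate) (i : 'I_n) (b : body) : hkind :=
  match b with
  | MWrite bit v => HWrite bit v
  | MRead => HRead (w_sync ls i)
  | MProceed => HProceed
  end.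

(* Body of the WRITE(b,v)-handler at p_i for a message from p_j, once its wait
   condition holds: new local state and messages sent (destination, body). *)
Definition exec_write (ls : lstate) (i j : 'I_n) (v : V) : lstate * seq ('I_n * body) :=
  let wsn := (w_sync ls j).+1 in
  if wsn == (w_sync ls i).+1 then
    let ws1 := upd (w_sync ls) i wsn in
    (LState (updh (history ls) wsn v) (upd ws1 j wsn) (r_sync ls) (op ls),
     [seq (l, MWrite (wsn %% 2) v) | l <- enum 'I_n & ws1 l == wsn.-1])
  else if wsn < w_sync ls i then
    (LState (history ls) (upd (w_sync ls) j wsn) (r_sync ls) (op ls),
     [:: (j, MWrite (wsn.+1 %% 2) (history ls wsn.+1))])
  else
    (LState (history ls) (upd (w_sync ls) j wsn) (r_sync ls) (op ls), [::]).

Variables (t : nat) (w : 'I_n).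

(* One atomic local action of process i in configuration c: new local state of i,
   new transit list, new pending list, and the list of messages it sends. *)
Inductive act (c : config) : 'I_n -> lstate -> seq msg -> seq handler ->
                              seq ('I_n * body) -> Prop :=
  | A_invoke_write (v : V) :
      op (loc c w) = Idle ->
      let ls := loc c w in
      let wsn := (w_sync ls w).+1 in
      let ws' := upd (w_sync ls) w wsn in
      act c w (LState (updh (history ls) wsn v) ws' (r_sync ls) (WWait wsn))
          (transit c) (pending c)
          [seq (j, MWrite (wsn %% 2) v) | j <- enum 'I_n & ws' j == wsn.-1]
  | A_return_write (i : 'I_n) (wsn : nat) :
      let ls := loc c i in
      op ls = WWait wsn ->
      n - t <= #|[set j | w_sync ls j == wsn]| ->
      act c i (LState (history ls) (w_sync ls) (r_sync ls) Idle)
          (transit c) (pending c) [::]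
  | A_invoke_read (i : 'I_n) :
      let ls := loc c i in
      op ls = Idle ->
      let rsn := (r_sync ls i).+1 in
      act c i (LState (history ls) (w_sync ls) (upd (r_sync ls) i rsn) (RWait1 rsn))
          (transit c) (pending c) [seq (j, MRead) | j <- enum 'I_n & j != i]
  | A_read_phase2 (i : 'I_n) (rsn : nat) :
      let ls := loc c i in
      op ls = RWait1 rsn ->
      n - t <= #|[set j | r_sync ls j == rsn]| ->
      act c i (LState (history ls) (w_sync ls) (r_sync ls) (RWait2 (w_sync ls i)))
          (transit c) (pending c) [::]
  | A_return_read (i : 'I_n) (sn : nat) :
      let ls := loc c i in
      op ls = RWait2 sn ->
      n - t <= #|[set j | sn <= w_sync ls j]| ->
      act c i (LState (history ls) (w_sync ls) (r_sync ls) Idle)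
          (transit c) (pending c) [::]
  | A_receive (i : 'I_n) (m : msg) (l1 l2 : seq msg) :
      transit c = l1 ++ m :: l2 ->
      m_dst m = i ->
      act c i (loc c i) (l1 ++ l2)
          (pending c ++ [:: Handler (m_id m) i (m_src m) (kind_of (loc c i) i (m_body m))])
          [::]
  | A_exec_write (i j : 'I_n) (hid b : nat) (v : V) (l1 l2 : seq handler) :
      pending c = l1 ++ Handler hid i j (HWrite b v) :: l2 ->
      b = (w_sync (loc c i) j).+1 %% 2 ->
      act c i (exec_write (loc c i) i j v).1 (transit c) (l1 ++ l2)
          (exec_write (loc c i) i j v).2
  | A_exec_read (i j : 'I_n) (hid sn : nat) (l1 l2 : seq handler) :
      pending c = l1 ++ Handler hid i j (HRead sn) :: l2 ->
      sn <= w_sync (loc c i) j ->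
      act c i (loc c i) (transit c) (l1 ++ l2) [:: (j, MProceed)]
  | A_exec_proceed (i j : 'I_n) (hid : nat) (l1 l2 : seq handler) :
      pending c = l1 ++ Handler hid i j HProceed :: l2 ->
      let ls := loc c i in
      act c i (LState (history ls) (w_sync ls) (upd (r_sync ls) j (r_sync ls j).+1) (op ls))
          (transit c) (l1 ++ l2) [::].

Definition mk_out (c : config) (i : 'I_n) (out : seq ('I_n * body)) : seq msg :=
  [seq Msg (fresh c) i d.1 d.2 | d <- out].

(* Global steps: a non-crashed process performs an action; or it performs an
   action during which it crashes (only an arbitrary subset of its messages is
   sent); or it simply crashes. *)
Inductive step (c c' : config) : Prop :=
  | S_act (i : 'I_n) ls' tr' pd' out :
      ~~ crashed c i -> act c i ls' tr' pd' out ->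
      c' = Config (upd (loc c) i ls') (crashed c) (tr' ++ mk_out c i out) pd' (fresh c).+1 ->
      step c c'
  | S_act_crash (i : 'I_n) ls' tr' pd' out (msk : bitseq) :
      ~~ crashed c i -> act c i ls' tr' pd' out ->
      c' = Config (upd (loc c) i ls') (upd (crashed c) i true)
                  (tr' ++ mk_out c i (mask msk out)) pd' (fresh c).+1 ->
      step c c'
  | S_crash (i : 'I_n) :
      ~~ crashed c i ->
      c' = Config (loc c) (upd (crashed c) i true) (transit c) (pending c) (fresh c) ->
      step c c'.

Variable v0 : V.

Definition init_config : config :=
  Config (fun _ => LState (fun _ => v0) (fun _ => 0) (fun _ => 0) Idle)
         (fun _ => false) [::] [::] 0.

Definition is_run (r : nat -> config) : Prop :=
  r 0 = init_config /\ forall k, step (r k) (r k.+1) \/ r k.+1 = r k.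

Definition correct (r : nat -> config) (i : 'I_n) : Prop :=
  forall k, ~~ crashed (r k) i.

Definition at_most_t_crash (r : nat -> config) : Prop :=
  forall k, #|[set i | crashed (r k) i]| <= t.

Definition op_enabled (ls : lstate) : bool :=
  match op ls with
  | Idle => false
  | WWait wsn => n - t <= #|[set j | w_sync ls j == wsn]|
  | RWait1 rsn => n - t <= #|[set j | r_sync ls j == rsn]|
  | RWait2 sn => n - t <= #|[set j | sn <= w_sync ls j]|
  end.

Definition h_enabled (c : config) (h : handler) : bool :=
  let ls := loc c (h_owner h) in
  match h_kind h with
  | HWrite b _ => b == (w_sync ls (h_from h)).+1 %% 2
  | HRead sn => sn <= w_sync ls (h_from h)
  | HProceed => true
  end.

(* Fairness: reliable channels (every message to a correct process is eventually
   received) and weak fairness of the local actions of correct processes. *)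
Definition fair (r : nat -> config) : Prop :=
  (forall k m, List.In m (transit (r k)) -> correct r (m_dst m) ->
     exists2 k', k <= k' & ~ List.In m (transit (r k'))) /\
  (forall k h, correct r (h_owner h) ->
     ~ (forall k', k <= k' -> List.In h (pending (r k')) /\ h_enabled (r k') h)) /\
  (forall k i, correct r i ->
     ~ (forall k', k <= k' -> op_enabled (loc (r k') i) /\
                              op (loc (r k'.+1) i) = op (loc (r k') i))).

End Algo.

From mathcomp Require Import all_boot zify.
From Stdlib Require Import Classical FunctionalExtensionality.

Set Implicit Arguments.
Unset Strict Implicit.
Unset Printing Implicit Defensive.

(* If a correct reader never returned, it would stay forever in one of its two
   waits.  Both are quorum conditions over n - t processes and at most t
   processes crash, so it suffices that every correct p_j eventually satisfies
   the condition for good.  For the second wait (w_sync_i[j] >= sn) this is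
   write propagation: WRITE messages on a link carry alternating bits, which
   keeps them processed in order, and as long as p_i's own sequence number is
   ahead of what it knows of p_j, a WRITE is in flight on one of the two links
   between them.  For the first wait, each read() of p_i sends p_j a token
   (READ message, READ handler, PROCEED message, PROCEED handler) whose last
   step increments r_sync_i[j]; the READ handler only waits for write
   propagation from p_j to p_i.  A read wait that is enabled forever contradicts
   the weak fairness of local actions.  All of this rests on an invariant of
   reachable configurations that accounts for every message in transit. *)

(* Messages carry values of an arbitrary type V, which has no decidable
   equality, so membership in transit and pending lists is [List.In]. *)
Section ListIn.
Variables A B : Type.
Implicit Types (s : seq A) (P : pred A).

Lemma In_cat_inv (x : A) s1 s2 : List.In x (s1 ++ s2) -> List.In x s1 \/ List.In x s2.
Proof. exact: List.in_app_or. Qed.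

Lemma In_cat_cons (x y : A) s1 s2 : List.In x (s1 ++ s2) -> List.In x (s1 ++ y :: s2).
Proof.
by move=> /In_cat_inv [] H; apply: List.in_or_app; [left | right; right].
Qed.

Lemma In_cat_cons_removed (x y : A) s1 s2 :
  List.In x (s1 ++ y :: s2) -> ~ List.In x (s1 ++ s2) -> x = y.
Proof. by move=> H1 H2; case: (List.in_elt_inv _ _ _ _ H1) => // /H2. Qed.

Lemma In_map_inv (f : A -> B) s y : List.In y (map f s) -> exists2 x, List.In x s & y = f x.
Proof.
elim: s => //= a s IH [<-|/IH [x H1 H2]]; first by exists a; auto.
by exists x; auto.
Qed.

Lemma In_map (f : A -> B) s x : List.In x s -> List.In (f x) (map f s).
Proof. by elim: s => //= a s IH [<-|/IH]; auto. Qed.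

Lemma In_filter_inv P s x : List.In x (filter P s) -> P x /\ List.In x s.
Proof.
elim: s => //= a s IH; case: ifP => Pa /=; first case=> [<-|/IH [H1 H2]]; auto.
by move/IH => [H1 H2]; auto.
Qed.

Lemma In_mask (m : bitseq) s x : List.In x (mask m s) -> List.In x s.
Proof.
elim: s m => [|a s IH] [|[] m] //= H; first by case: H => [->|/IH]; auto.
by right; apply: IH H.
Qed.

Lemma count_In0 P s : (forall x, List.In x s -> ~~ P x) -> count P s = 0.
Proof.
elim: s => //= a s IH H; rewrite IH; last by move=> x Hx; apply: H; right.
by rewrite (negbTE (H a (or_introl erefl))).
Qed.

Lemma count_gt0_In P s : 0 < count P s -> exists2 x, List.In x s & P x.
Proof.
elim: s => //= a s IH; case Pa: (P a) => /=; first by exists a; auto.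
by move/IH => [x H1 H2]; exists x; auto.
Qed.

Lemma count_cat_cons P s1 (x : A) s2 :
  count P (s1 ++ x :: s2) = count P (s1 ++ s2) + P x.
Proof. rewrite !count_cat /=; lia. Qed.

Lemma pmap_map (C : Type) (f : B -> option C) (g : A -> B) s :
  pmap f (map g s) = pmap (fun x => f (g x)) s.
Proof. by elim: s => //= a s ->. Qed.

Lemma pmap_None (C : Type) (f : A -> option C) s : (forall x, f x = None) -> pmap f s = [::].
Proof. by move=> H; elim: s => //= a s ->; rewrite H. Qed.

Lemma pmap_cat_cons_None (C : Type) (f : A -> option C) s1 (x : A) s2 :
  f x = None -> pmap f (s1 ++ x :: s2) = pmap f (s1 ++ s2).
Proof. by move=> H; rewrite !pmap_cat /= H. Qed.

Lemma pmap_if_Some (C : Type) P (b : C) s :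
  pmap (fun x => if P x then Some b else None) s = nseq (count P s) b.
Proof. by elim: s => //= a s ->; case: (P a). Qed.

Lemma mem_pmap_In (C : eqType) (f : A -> option C) s (x : C) :
  x \in pmap f s -> exists2 y, List.In y s & f y = Some x.
Proof.
elim: s => //= a s IH; case E: (f a) => [y|] /=; last by move/IH => [z H1 H2]; exists z; auto.
rewrite in_cons => /orP [/eqP ->|/IH [z H1 H2]]; first by exists a; auto.
by exists z; auto.
Qed.

End ListIn.

Lemma count_enum_eq_and (T : finType) (P : pred T) b :
  count (fun j => (j == b) && P j) (enum T) = P b.
Proof.
case Pb: (P b).
  rewrite (eq_count (a2 := pred1 b)); last by move=> j /=; case: eqP => // ->; rewrite Pb.
  by rewrite count_uniq_mem ?enum_uniq // mem_enum.
rewrite (eq_count (a2 := pred0)) ?count_pred0 //.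
by move=> j /=; case: eqP => // ->; rewrite Pb.
Qed.

Lemma last_before (P : nat -> Prop) k k' : k <= k' -> P k -> ~ P k' ->
  exists2 k'', k <= k'' < k' & P k'' /\ ~ P k''.+1.
Proof.
elim: k' => [|k' IH] le Pk nP; first by move: le; rewrite leqn0 => /eqP E; subst k.
case: (leqP k k') => [le'|lt]; last first.
  have E : k = k'.+1 by apply/eqP; rewrite eqn_leq le lt.
  by case: nP; rewrite -E.
case: (classic (P k')) => H; first by exists k'; [rewrite le' ltnSn|].
by have [k'' /andP [a b] c] := IH le' Pk H; exists k''; [rewrite a ltnW|].
Qed.

Lemma reach_by_progress (f : nat -> nat) (x T0 : nat) :
  {homo f : a b / a <= b} ->
  (forall T, T0 <= T -> f T < x -> exists T', f T < f T') ->
  exists2 T, T0 <= T & x <= f T.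
Proof.
move=> mono prog.
suff H : forall d T, T0 <= T -> x - f T <= d -> exists2 T', T0 <= T' & x <= f T'.
  exact: (H _ T0 (leqnn _) (leqnn _)).
elim=> [|d IH] T le Hd; first by exists T => //; lia.
case: (leqP x (f T)) => [H|H]; first by exists T.
have [T' gt] := prog T le H.
have leT : T <= T' by rewrite leqNgt; apply/negP => /ltnW /mono; lia.
by apply: (IH T'); [exact: leq_trans le leT | lia].
Qed.

Lemma eventually_forall_fin (T : finType) (P : T -> nat -> Prop) :
  (forall j, exists k, forall k', k <= k' -> P j k') ->
  exists K, forall j k', K <= k' -> P j k'.
Proof.
move=> H.
suff [K HK] : exists K, forall j, j \in enum T -> forall k', K <= k' -> P j k'.
  by exists K => j; apply: HK; rewrite mem_enum.
elim: (enum T) => [|a s [K HK]]; first by exists 0.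
have [ka Ha] := H a; exists (maxn K ka) => j; rewrite in_cons => /orP [/eqP -> | Hj] k' le.
  by apply: Ha; apply: leq_trans le; apply: leq_maxr.
by apply: HK Hj _ (leq_trans (leq_maxl _ _) le).
Qed.

(** * An invariant of reachable configurations *)

Section Invariant.
Variables (V : Type) (n t : nat) (w : 'I_n).
Local Notation config := (config V n).
Local Notation msg := (msg V n).
Local Notation handler := (handler V n).
Local Notation act := (act t w).
Local Notation step := (step t w).
Implicit Types (c : config) (p q i j : 'I_n).

Definition ws c p q := w_sync (loc c p) q.
Definition rs c p q := r_sync (loc c p) q.

Definition msg_wbit q p (m : msg) : option nat :=
  if (m_src m == q) && (m_dst m == p) then
    (if m_body m is MWrite b _ then Some b else None) else None.
Definition handler_wbit q p (h : handler) : option nat :=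
  if (h_owner h == p) && (h_from h == q) then
    (if h_kind h is HWrite b _ then Some b else None) else None.

Definition wchan c q p :=
  pmap (msg_wbit q p) (transit c) ++ pmap (handler_wbit q p) (pending c).
Definition wsent c q p := ws c p q + size (wchan c q p).
Definition alt_bits (v k : nat) := [seq x %% 2 | x <- iota v.+1 k].

Lemma alt_bits_rcons v k : alt_bits v k.+1 = alt_bits v k ++ [:: (v + k.+1) %% 2].
Proof. by rewrite /alt_bits -[k.+1]addn1 iotaD map_cat /= addn1 addSnnS. Qed.

(* [wsent c q p] counts the writes q has forwarded to p, processed by p or
   still on the link.  Channels are not FIFO: what keeps the link in order is
   that the bits in flight are the parities of the next sequence numbers p
   expects from q, and that while q knows p to be behind, exactly one
   forwarded write is beyond what q knows p has. *)
Definition wlink_ok c q p :=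
  [/\ wsent c q p <= ws c q q, ws c q p <= wsent c q p,
      ws c q p < ws c q q -> wsent c q p = (ws c q p).+1 &
      perm_eq (wchan c q p) (alt_bits (ws c p q) (size (wchan c q p)))].

Definition read_msg i j (m : msg) :=
  [&& m_src m == i, m_dst m == j & if m_body m is MRead then true else false].
Definition proceed_msg j i (m : msg) :=
  [&& m_src m == j, m_dst m == i & if m_body m is MProceed then true else false].
Definition read_handler j i (h : handler) :=
  [&& h_owner h == j, h_from h == i & if h_kind h is HRead _ then true else false].
Definition proceed_handler i j (h : handler) :=
  [&& h_owner h == i, h_from h == j & if h_kind h is HProceed then true else false].

(* Each read() of i launches one token towards j, which travels as a READ
   message, a READ handler, a PROCEED message and a PROCEED handler before it
   increments [r_sync_i[j]]. *)
Definition read_tokens c i j :=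
  rs c i j + count (proceed_msg j i) (transit c) + count (proceed_handler i j) (pending c)
  + count (read_msg i j) (transit c) + count (read_handler j i) (pending c).

Record Inv c : Prop := {
  inv_transit_src : forall m, List.In m (transit c) -> m_src m != m_dst m;
  inv_pending_src : forall h, List.In h (pending c) -> h_owner h != h_from h;
  inv_ws_le_own : forall p q, ws c p q <= ws c p p;
  inv_wlink : forall q p, q != p -> ~~ crashed c q -> wlink_ok c q p;
  inv_read_tokens : forall i j, i != j -> ~~ crashed c i -> ~~ crashed c j ->
    read_tokens c i j = rs c i i;
  inv_hread_sn : forall h sn, List.In h (pending c) -> h_kind h = HRead V sn ->
    sn <= ws c (h_owner h) (h_owner h);
  inv_rwait1 : forall i rsn, op (loc c i) = RWait1 rsn -> rs c i i = rsn;
  inv_rwait2 : forall i sn, op (loc c i) = RWait2 sn -> sn <= ws c i i }.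

Lemma inv_init (v0 : V) : Inv (init_config n v0).
Proof. by split=> //= *; rewrite /wlink_ok /wsent /wchan /ws /read_tokens /rs. Qed.

Lemma wlink_ok_transfer c c' q p :
  ws c' q p = ws c q p -> ws c' p q = ws c p q -> ws c' q q = ws c q q ->
  perm_eq (wchan c' q p) (wchan c q p) -> wlink_ok c q p -> wlink_ok c' q p.
Proof.
move=> E1 E2 E3 Ech [U L D B].
have Es : size (wchan c' q p) = size (wchan c q p) := perm_size Ech.
rewrite /wsent in U L D; rewrite /wlink_ok /wsent E1 E2 E3 Es; split=> //.
exact: perm_trans Ech B.
Qed.

Lemma wlink_ok_perm c c' q p : ws c' = ws c ->
  perm_eq (wchan c' q p) (wchan c q p) -> wlink_ok c q p -> wlink_ok c' q p.
Proof. by move=> E; apply: wlink_ok_transfer; rewrite E. Qed.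

Definition after_act c i ls' tr' pd' out :=
  Config (upd (loc c) i ls') (crashed c) (tr' ++ mk_out c i out) pd' (fresh c).+1.

Lemma loc_after_self c i ls' tr' pd' out : loc (after_act c i ls' tr' pd' out) i = ls'.
Proof. by rewrite /after_act /upd /= eqxx. Qed.

Lemma loc_after_other c i ls' tr' pd' out p : p != i ->
  loc (after_act c i ls' tr' pd' out) p = loc c p.
Proof. by move=> H; rewrite /after_act /upd /= (negbTE H). Qed.

Lemma ws_after_other c i ls' tr' pd' out p q : p != i ->
  ws (after_act c i ls' tr' pd' out) p q = ws c p q.
Proof. by move=> H; rewrite /ws loc_after_other. Qed.

Lemma ws_after_self c i ls' tr' pd' out q :
  ws (after_act c i ls' tr' pd' out) i q = w_sync ls' q.
Proof. by rewrite /ws loc_after_self. Qed.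

Lemma loc_after_same c i tr' pd' out : loc (after_act c i (loc c i) tr' pd' out) = loc c.
Proof. by apply: functional_extensionality => j; rewrite /after_act /upd /=; case: eqP => // ->. Qed.

Lemma ws_after_same_sync c i ls' tr' pd' out : w_sync ls' = w_sync (loc c i) ->
  ws (after_act c i ls' tr' pd' out) = ws c.
Proof.
move=> E; apply: functional_extensionality => p; apply: functional_extensionality => q.
by rewrite /ws /after_act /upd /=; case: eqP => // ->; rewrite E.
Qed.

Lemma rs_after c i ls' tr' pd' out p q :
  rs (after_act c i ls' tr' pd' out) p q = if p == i then r_sync ls' q else rs c p q.
Proof. by rewrite /rs /after_act /upd /=; case: eqP. Qed.

Definition transit_change c i (tr' : seq msg) :=
  tr' = transit c \/
  exists l1 m l2, [/\ transit c = l1 ++ m :: l2, tr' = l1 ++ l2 & m_dst m = i].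
Definition pending_change c i (pd' : seq handler) :=
  pd' = pending c \/ (exists h, pd' = pending c ++ [:: h] /\ h_owner h = i) \/
  exists l1 h l2, [/\ pending c = l1 ++ h :: l2, pd' = l1 ++ l2 & h_owner h = i].

Lemma act_shape c i ls' tr' pd' out : act c i ls' tr' pd' out ->
  transit_change c i tr' /\ pending_change c i pd'.
Proof.
case=> /=; try by move=> *; split; left.
- move=> i0 m l1 l2 E D; split; first by right; exists l1, m, l2.
  by right; left; eexists.
- move=> i0 j hid b v l1 l2 E _; split; first by left.
  by right; right; exists l1, (Handler hid i0 j (HWrite b v)), l2.
- move=> i0 j hid sn l1 l2 E _; split; first by left.
  by right; right; exists l1, (Handler hid i0 j (HRead V sn)), l2.
- move=> i0 j hid l1 l2 E; split; first by left.
  by right; right; exists l1, (Handler hid i0 j (HProceed V)), l2.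
Qed.

Lemma transit_change_pmap c i tr' (U : Type) (f : msg -> option U) : transit_change c i tr' ->
  (forall m, m_dst m = i -> f m = None) -> pmap f tr' = pmap f (transit c).
Proof. by case=> [->//|[l1 [m [l2 [-> -> E]]]]] H; rewrite pmap_cat_cons_None // H. Qed.

Lemma pending_change_pmap c i pd' (U : Type) (f : handler -> option U) :
  pending_change c i pd' ->
  (forall h, h_owner h = i -> f h = None) -> pmap f pd' = pmap f (pending c).
Proof.
case=> [->//|[[h [-> E]]|[l1 [h [l2 [-> -> E]]]]]] H.
  by rewrite pmap_cat /= H // cats0.
by rewrite pmap_cat_cons_None // H.
Qed.

Lemma In_mk_out c i out m : List.In m (mk_out c i out) ->
  m_src m = i /\ exists2 d : 'I_n * body V, List.In d out & m_dst m = d.1 /\ m_body m = d.2.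
Proof.
rewrite /mk_out; elim: out => //= d out IH [<-|/IH [E [d' H1 H2]]].
  by split=> //; exists d; auto.
by split=> //; exists d'; auto.
Qed.

Definition out_wbits p (out : seq ('I_n * body V)) :=
  pmap (fun d => if d.1 == p then (if d.2 is MWrite b _ then Some b else None) else None) out.

Lemma wchan_after_other c i ls' tr' pd' out q p : act c i ls' tr' pd' out ->
  p != i -> q != i -> wchan (after_act c i ls' tr' pd' out) q p = wchan c q p.
Proof.
move=> /act_shape [Ht Hp] pi qi; rewrite /wchan /= pmap_cat /mk_out pmap_map.
have ip : (i == p) = false by rewrite eq_sym (negbTE pi).
rewrite (transit_change_pmap Ht); last by move=> m E; rewrite /msg_wbit E ip andbF.
rewrite (pending_change_pmap Hp); last by move=> h E; rewrite /handler_wbit E ip.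
have -> : pmap (fun d => msg_wbit q p (Msg (fresh c) i d.1 d.2)) out = [::].
  by apply: pmap_None => d; rewrite /msg_wbit /= eq_sym (negbTE qi).
by rewrite cats0.
Qed.

Lemma wchan_after_sender c i ls' tr' pd' out p : act c i ls' tr' pd' out -> p != i ->
  perm_eq (wchan (after_act c i ls' tr' pd' out) i p) (wchan c i p ++ out_wbits p out).
Proof.
move=> /act_shape [Ht Hp] pi; rewrite /wchan /= pmap_cat /mk_out pmap_map.
have ip : (i == p) = false by rewrite eq_sym (negbTE pi).
rewrite (transit_change_pmap Ht); last by move=> m E; rewrite /msg_wbit E ip andbF.
rewrite (pending_change_pmap Hp); last by move=> h E; rewrite /handler_wbit E ip.
have -> : pmap (fun d => msg_wbit i p (Msg (fresh c) i d.1 d.2)) out = out_wbits p out.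
  by rewrite /out_wbits; elim: out => //= d out ->; rewrite /msg_wbit /= eqxx.
by rewrite -!catA perm_cat2l perm_catC.
Qed.

Lemma inv_local c i ls' : Inv c ->
  w_sync ls' = w_sync (loc c i) -> r_sync ls' = r_sync (loc c i) ->
  (forall rsn, op ls' = RWait1 rsn -> rs c i i = rsn) ->
  (forall sn, op ls' = RWait2 sn -> sn <= ws c i i) ->
  Inv (after_act c i ls' (transit c) (pending c) [::]).
Proof.
move=> [] NT NP IV IW IR IHR O1 O2 Ew Er H1 H2.
set c' := after_act _ _ _ _ _ _.
have Ews : ws c' = ws c by apply: ws_after_same_sync.
have Ers : rs c' = rs c.
  apply: functional_extensionality => p; apply: functional_extensionality => q.
  by rewrite rs_after; case: eqP => // ->; rewrite Er.
have Ech : wchan c' = wchan c by rewrite /wchan /= cats0.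
have ER : read_tokens c' = read_tokens c by rewrite /read_tokens Ers /= cats0.
split; rewrite ?Ews ?Ers ?ER /= ?cats0 //.
- by move=> q p qp cq; apply: wlink_ok_perm Ews _ (IW _ _ qp cq); rewrite Ech.
- move=> j rsn; rewrite /c' /after_act /upd /=; case: eqP => [->|_]; [exact: H1|exact: O1].
- move=> j sn; rewrite /c' /after_act /upd /=; case: eqP => [->|_]; [exact: H2|exact: O2].
Qed.

Lemma inv_receive c i m l1 l2 : Inv c -> transit c = l1 ++ m :: l2 -> m_dst m = i ->
  Inv (after_act c i (loc c i) (l1 ++ l2)
     (pending c ++ [:: Handler (m_id m) i (m_src m) (kind_of (loc c i) i (m_body m))]) [::]).
Proof.
move=> [] NT NP IV IW IR IHR O1 O2 Et Ed.
set h := Handler _ _ _ _; set c' := after_act _ _ _ _ _ _.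
have Hloc : loc c' = loc c by rewrite loc_after_same.
have Ews : ws c' = ws c by rewrite /ws Hloc.
have Ers : rs c' = rs c by rewrite /rs Hloc.
have Ech : forall q p, perm_eq (wchan c' q p) (wchan c q p).
  move=> q p; rewrite /wchan /= cats0 Et !pmap_cat /=.
  have -> : handler_wbit q p h = msg_wbit q p m.
    by rewrite /handler_wbit /msg_wbit /= Ed andbC; case: (m_body m).
  case: (msg_wbit q p m) => [b|] /=; rewrite ?cats0 //.
  by apply/permP => x; rewrite !count_cat /=; lia.
split; rewrite ?Ews ?Ers //=.
- move=> m0; rewrite cats0 => H; apply: NT; rewrite Et; exact: In_cat_cons H.
- move=> h0 Hh; case: (In_cat_inv Hh) => [|[<-|[]]]; first exact: NP.
  by rewrite /h /= eq_sym -Ed; apply: NT; rewrite Et; apply: List.in_elt.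
- by move=> q p qp cq; apply: wlink_ok_perm Ews (Ech q p) (IW _ _ qp cq).
- move=> a b ab ca cb; rewrite -(IR a b ab ca cb) /read_tokens Ers /= cats0 Et.
  rewrite !count_cat_cons !count_cat /=.
  have -> : read_msg a b m = read_handler b a h.
    by rewrite /read_msg /read_handler /= Ed; case: (m_body m) => *; rewrite /= ?andbF // !andbT andbC.
  have -> : proceed_msg b a m = proceed_handler a b h.
    by rewrite /proceed_msg /proceed_handler /= Ed; case: (m_body m) => *; rewrite /= ?andbF // !andbT andbC.
  lia.
- move=> h0 sn Hh; case: (In_cat_inv Hh) => [H2|[<-|[]]]; first exact: IHR.
  by rewrite /h /=; case: (m_body m) => [b v||] //= [] <-.
- by move=> j rsn; rewrite /upd; case: eqP => [->|_]; apply: O1.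
- by move=> j sn; rewrite /upd; case: eqP => [->|_]; apply: O2.
Qed.

Lemma inv_exec_read c i j hid sn l1 l2 : Inv c ->
  pending c = l1 ++ Handler hid i j (HRead V sn) :: l2 ->
  Inv (after_act c i (loc c i) (transit c) (l1 ++ l2) [:: (j, MProceed V)]).
Proof.
move=> [] NT NP IV IW IR IHR O1 O2 Ep.
set h := Handler hid i j (HRead V sn); set c' := after_act _ _ _ _ _ _.
have Hloc : loc c' = loc c by rewrite loc_after_same.
have Ews : ws c' = ws c by rewrite /ws Hloc.
have Ers : rs c' = rs c by rewrite /rs Hloc.
have Ech : forall q p, wchan c' q p = wchan c q p.
  move=> q p; rewrite /wchan /= Ep !pmap_cat /=.
  rewrite /msg_wbit /handler_wbit /=.
  by case: ((i == q) && (j == p)); case: ((i == p) && (j == q)); rewrite /= ?cats0.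
have Hsub : forall h0, List.In h0 (l1 ++ l2) -> List.In h0 (pending c).
  by move=> h0 H; rewrite Ep; apply: In_cat_cons.
split; rewrite ?Ews ?Ers //.
- move=> m0 Hm; case: (In_cat_inv Hm) => [|[<-|[]]]; first exact: NT.
  by apply: (NP h); rewrite Ep; apply: List.in_elt.
- by move=> h0 /Hsub; apply: NP.
- by move=> q p qp cq; apply: wlink_ok_perm Ews _ (IW _ _ qp cq); rewrite Ech.
- move=> a b ab ca cb; rewrite -(IR a b ab ca cb) /read_tokens Ers /= Ep.
  rewrite !count_cat_cons !count_cat /=.
  rewrite /proceed_msg /read_handler /read_msg /proceed_handler /= !andbF !andbT; lia.
- by move=> h0 sn0 /Hsub; apply: IHR.
- by move=> k rsn; rewrite Hloc; exact: O1.
- by move=> k sn0; rewrite Hloc; exact: O2.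
Qed.

Lemma inv_exec_proceed c i j hid l1 l2 : Inv c ->
  pending c = l1 ++ Handler hid i j (HProceed V) :: l2 ->
  Inv (after_act c i (LState (history (loc c i)) (w_sync (loc c i))
        (upd (r_sync (loc c i)) j (r_sync (loc c i) j).+1) (op (loc c i)))
        (transit c) (l1 ++ l2) [::]).
Proof.
move=> [] NT NP IV IW IR IHR O1 O2 Ep.
set h := Handler hid i j (HProceed V); set c' := after_act _ _ _ _ _ _.
have ji : i != j by apply: (NP h); rewrite Ep; apply: List.in_elt.
have Ews : ws c' = ws c by apply: ws_after_same_sync.
have Ers : forall a b, rs c' a b = rs c a b + ((a == i) && (b == j)).
  move=> a b; rewrite rs_after; case: (a =P i) => [->|] /=; last by rewrite addn0.
  by rewrite /upd /rs; case: (b =P j) => [->|]; rewrite ?addn1 ?addn0.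
have Ech : forall q p, wchan c' q p = wchan c q p.
  move=> q p; rewrite /wchan /= cats0 Ep !pmap_cat /=.
  by rewrite /handler_wbit /=; case: (_ && _).
have Hsub : forall h0, List.In h0 (l1 ++ l2) -> List.In h0 (pending c).
  by move=> h0 H; rewrite Ep; apply: In_cat_cons.
have Eop : forall k, op (loc c' k) = op (loc c k).
  by move=> k; rewrite /c' /after_act /upd /=; case: eqP => // ->.
split; rewrite ?Ews //.
- by move=> m0 /=; rewrite cats0; apply: NT.
- by move=> h0 /Hsub; apply: NP.
- by move=> q p qp cq; apply: wlink_ok_perm Ews _ (IW _ _ qp cq); rewrite Ech.
- move=> a b ab ca cb; rewrite [rs c' a a]Ers.
  have -> : (a == i) && (a == j) = false by case: (a =P i) => // ->; rewrite (negbTE ji).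
  rewrite addn0 -(IR a b ab ca cb) /read_tokens Ers /= cats0 Ep !count_cat_cons.
  rewrite /proceed_handler /read_handler /= [(i == a)]eq_sym [(j == b)]eq_sym !andbT !andbF; lia.
- by move=> h0 sn0 /Hsub; apply: IHR.
- move=> k rsn; rewrite Eop Ers => /O1 <-; case: (k =P i) => [->|] /=; last by rewrite addn0.
  by rewrite (negbTE ji) addn0.
- by move=> k sn0; rewrite Eop; apply: O2.
Qed.

Lemma count_mk_out_reads (P : pred msg) c i :
  count P (mk_out c i [seq (j, MRead V) | j <- enum 'I_n & j != i]) =
  count (fun j => P (Msg (fresh c) i j (MRead V)) && (j != i)) (enum 'I_n).
Proof. by rewrite /mk_out -map_comp [LHS]count_map count_filter. Qed.

Lemma inv_invoke_read c i : Inv c -> op (loc c i) = Idle ->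
  Inv (after_act c i (LState (history (loc c i)) (w_sync (loc c i))
        (upd (r_sync (loc c i)) i (r_sync (loc c i) i).+1) (RWait1 (r_sync (loc c i) i).+1))
        (transit c) (pending c) [seq (j, MRead V) | j <- enum 'I_n & j != i]).
Proof.
move=> [] NT NP IV IW IR IHR O1 O2 Eop.
set out := [seq _ | j <- _ & _]; set c' := after_act _ _ _ _ _ _.
have Ews : ws c' = ws c by apply: ws_after_same_sync.
have Ers : forall a b, rs c' a b = rs c a b + ((a == i) && (b == i)).
  move=> a b; rewrite rs_after; case: (a =P i) => [->|] /=; last by rewrite addn0.
  by rewrite /upd /rs; case: (b =P i) => [->|]; rewrite ?addn1 ?addn0.
have Ech : forall q p, wchan c' q p = wchan c q p.
  move=> q p; rewrite /wchan /= pmap_cat /mk_out pmap_map.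
  have -> : pmap (fun d => msg_wbit q p (Msg (fresh c) i d.1 d.2)) out = [::].
    by rewrite /out pmap_map; apply: pmap_None => d; rewrite /msg_wbit /=; case: ifP.
  by rewrite cats0.
split; rewrite ?Ews //.
- move=> m0 /= Hm; case: (In_cat_inv Hm) => [|H2]; first exact: NT.
  case: (In_mk_out H2) => -> [d H3 [-> _]].
  case: (In_map_inv H3) => j H4 ->; case: (In_filter_inv H4) => ji _ /=.
  by rewrite eq_sym.
- by move=> q p qp cq; apply: wlink_ok_perm Ews _ (IW _ _ qp cq); rewrite Ech.
- move=> a b ab ca cb; rewrite !Ers andbb -(IR a b ab ca cb) /read_tokens Ers /=.
  rewrite !count_cat !count_mk_out_reads.
  rewrite [count (fun j => proceed_msg b a _ && _) _](eq_count (a2 := pred0)) ?count_pred0;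
    last by move=> j; rewrite /proceed_msg /= !andbF.
  rewrite (eq_count (a2 := fun j => (j == b) && ((i == a) && (j != i)))); last first.
    by move=> j; rewrite /read_msg /= andbT; case: (j == b); case: (i == a).
  rewrite count_enum_eq_and.
  case: (a =P i) => [Ea|/eqP ai].
    have bi : (b == i) = false by apply/negbTE; rewrite -Ea eq_sym.
    by rewrite Ea eqxx bi /=; lia.
  by rewrite [i == a]eq_sym (negbTE ai) /=; lia.
- move=> k rsn; rewrite Ers; case: (k =P i) => [->|/eqP ki].
    by rewrite /c' loc_after_self /= => -[<-]; rewrite addn1.
  by rewrite /c' loc_after_other // addn0; apply: O1.
- move=> k sn0; case: (k =P i) => [->|/eqP ki]; first by rewrite /c' loc_after_self.
  by rewrite /c' loc_after_other //; apply: O2.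
Qed.

Lemma wlink_ok_adopt c c' i p : Inv c -> ~~ crashed c i -> p != i ->
  ws c' i i = (ws c i i).+1 ->
  ws c' i p = ws c i p \/ ws c' i p = (ws c i i).+1 /\ ws c i p = ws c i i ->
  ws c' p i = ws c p i ->
  perm_eq (wchan c' i p)
    (wchan c i p ++ if ws c i p == ws c i i then [:: (ws c i i).+1 %% 2] else [::]) ->
  wlink_ok c' i p.
Proof.
move=> Hinv ci pi Ei Ep Epi; have ip : i != p by rewrite eq_sym.
have [U L D B] := inv_wlink Hinv ip ci; rewrite /wsent in U L D.
set ob := (if _ then _ else _) => Ech.
have Es : size (wchan c' i p) = size (wchan c i p) + size ob.
  by rewrite (perm_size Ech) size_cat.
rewrite /wlink_ok /wsent Ei Epi Es.
case: (ws c i p =P ws c i i) => [E|/eqP NE].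
- have Eob : ob = [:: (ws c i i).+1 %% 2] by rewrite /ob E eqxx.
  have Es0 : ws c p i + size (wchan c i p) = ws c i i.
    by apply/eqP; rewrite eqn_leq U -{1}E L.
  rewrite Eob /= addnA Es0 addn1; split=> //.
  + by case: Ep => [->|[-> _]]; rewrite ?E ?leqnSn.
  + by case: Ep => [->|[-> _]]; rewrite ?E ?ltnn.
  + rewrite Eob in Ech; apply: perm_trans Ech _.
    by rewrite addn1 alt_bits_rcons addnS Es0 perm_cat2r.
- case: Ep => [Ep|[_ E]]; last by rewrite E eqxx in NE.
  have Eob : ob = [::] by rewrite /ob (negbTE NE).
  have Es0 : ws c p i + size (wchan c i p) = (ws c i p).+1.
    by apply: D; rewrite ltn_neqAle NE (inv_ws_le_own Hinv).
  rewrite Eob addn0 Ep Es0; split=> //; first exact: (inv_ws_le_own Hinv).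
  by rewrite Eob cats0 in Ech; apply: perm_trans Ech B.
Qed.

Lemma wlink_ok_ack c c' i j : Inv c -> ~~ crashed c i -> j != i ->
  ws c' i i = ws c i i -> ws c' i j = (ws c i j).+1 -> ws c i j < ws c i i ->
  ws c' j i = ws c j i ->
  perm_eq (wchan c' i j)
    (wchan c i j ++ if (ws c i j).+1 < ws c i i then [:: (ws c i j).+2 %% 2] else [::]) ->
  wlink_ok c' i j.
Proof.
move=> Hinv ci ji Ei Ej lt Eji; have ij : i != j by rewrite eq_sym.
have [U L D B] := inv_wlink Hinv ij ci; rewrite /wsent in U L D.
have Es0 := D lt.
set ob := (if _ then _ else _) => Ech.
have Es : size (wchan c' i j) = size (wchan c i j) + size ob.
  by rewrite (perm_size Ech) size_cat.
rewrite /wlink_ok /wsent Ei Ej Eji Es.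
case: (ltnP (ws c i j).+1 (ws c i i)) => [lt2|ge].
- have Eob : ob = [:: (ws c i j).+2 %% 2] by rewrite /ob lt2.
  rewrite Eob /= addnA Es0 addn1; split=> //.
  rewrite Eob in Ech; apply: perm_trans Ech _.
  by rewrite addn1 alt_bits_rcons addnS Es0 perm_cat2r.
- have Eob : ob = [::] by rewrite /ob ltnNge ge.
  rewrite Eob addn0 Es0; split=> //.
  by rewrite Eob cats0 in Ech; apply: perm_trans Ech B.
Qed.

Lemma wlink_ok_deliver c c' q p :
  ws c' p q = (ws c p q).+1 -> ws c' q p = ws c q p -> ws c' q q = ws c q q ->
  perm_eq (wchan c q p) ((ws c p q).+1 %% 2 :: wchan c' q p) ->
  wlink_ok c q p -> wlink_ok c' q p.
Proof.
move=> Ep Eq Eqq Ech [U L D B]; rewrite /wsent in U L D.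
have Es : size (wchan c q p) = (size (wchan c' q p)).+1 by rewrite (perm_size Ech).
rewrite /wlink_ok /wsent Ep Eq Eqq addSnnS -Es; split=> //.
rewrite Es perm_sym in B Ech; rewrite -(perm_cons ((ws c p q).+1 %% 2)) perm_sym.
exact: perm_trans B Ech.
Qed.

Definition write_body (b : body V) := if b is MWrite _ _ then true else false.

Lemma inv_write_step c i ls' pd' out : Inv c ->
  (pd' = pending c \/ exists l1 h l2,
     [/\ pending c = l1 ++ h :: l2, pd' = l1 ++ l2 & exists b v, h_kind h = HWrite b v]) ->
  (forall d, List.In d out -> d.1 != i /\ write_body d.2) ->
  r_sync ls' = r_sync (loc c i) ->
  (forall q, w_sync ls' q <= w_sync ls' i) ->
  w_sync (loc c i) i <= w_sync ls' i ->
  (forall rsn, op ls' = RWait1 rsn -> op (loc c i) = RWait1 rsn) ->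
  (forall sn, op ls' = RWait2 sn -> op (loc c i) = RWait2 sn) ->
  (forall q p, q != p -> ~~ crashed c q ->
     wlink_ok (after_act c i ls' (transit c) pd' out) q p) ->
  Inv (after_act c i ls' (transit c) pd' out).
Proof.
move=> [] NT NP IV IW IR IHR O1 O2 Hpd Hout Er HV Hown Op1 Op2 HW.
set c' := after_act _ _ _ _ _ _.
have Hsub : forall h, List.In h pd' -> List.In h (pending c).
  by case: Hpd => [->//|[l1 [h [l2 [-> -> _]]]]] h0; apply: In_cat_cons.
have Ers : rs c' = rs c.
  apply: functional_extensionality => a; apply: functional_extensionality => b.
  by rewrite rs_after; case: eqP => // ->; rewrite Er.
have Hws : forall p, ws c p p <= ws c' p p.
  by move=> p; case: (p =P i) => [->|/eqP pi]; rewrite ?ws_after_self ?ws_after_other.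
split=> //.
- move=> m Hm; case: (In_cat_inv Hm) => [|H]; first exact: NT.
  case: (In_mk_out H) => -> [d /Hout [di _] [-> _]]; by rewrite eq_sym.
- by move=> h /Hsub; apply: NP.
- move=> p q; case: (p =P i) => [->|/eqP pi]; rewrite ?ws_after_self ?ws_after_other //.
- move=> a b ab ca cb; rewrite Ers -(IR a b ab ca cb) /read_tokens Ers /= !count_cat /mk_out !count_map.
  rewrite [count _ out]count_In0; last first.
    by move=> d /Hout [_]; rewrite /preim /proceed_msg /=; case: (d.2); rewrite ?andbF.
  rewrite [count _ out]count_In0; last first.
    by move=> d /Hout [_]; rewrite /preim /read_msg /=; case: (d.2); rewrite ?andbF.
  case: Hpd => [->|[l1 [h [l2 [-> -> [bw [v Eh]]]]]]]; first by rewrite !addn0.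
  rewrite !count_cat_cons /proceed_handler /read_handler Eh !andbF; lia.
- by move=> h sn /Hsub H1 H2; apply: leq_trans (IHR _ _ H1 H2) (Hws _).
- move=> k rsn; case: (k =P i) => [->|/eqP ki]; rewrite Ers.
    by rewrite loc_after_self => /Op1; apply: O1.
  by rewrite loc_after_other //; apply: O1.
- move=> k sn; case: (k =P i) => [->|/eqP ki].
    by rewrite loc_after_self => /Op2 /O2 H; apply: leq_trans H (Hws _).
  by rewrite loc_after_other // ws_after_other //; apply: O2.
Qed.

Lemma out_wbits_bcast p (P : pred 'I_n) b (v : V) :
  out_wbits p [seq (l, MWrite b v) | l <- enum 'I_n & P l] = if P p then [:: b] else [::].
Proof.
rewrite /out_wbits pmap_map /= pmap_if_Some count_filter.
by rewrite (eq_count (a2 := fun j => (j == p) && P j)) // count_enum_eq_and; case: (P p).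
Qed.

Lemma exec_write_cases ls i j (v : V) : j != i -> w_sync ls j <= w_sync ls i ->
  let ls' := (exec_write ls i j v).1 in let out := (exec_write ls i j v).2 in
  [/\ r_sync ls' = r_sync ls, op ls' = op ls,
      forall q, q != i -> q != j -> w_sync ls' q = w_sync ls q,
      w_sync ls' j = (w_sync ls j).+1 &
   [\/ [/\ w_sync ls j = w_sync ls i, w_sync ls' i = (w_sync ls i).+1 &
          forall p, p != i -> out_wbits p out =
            if w_sync ls p == w_sync ls i then [:: (w_sync ls i).+1 %% 2] else [::]] |
       [/\ w_sync ls j < w_sync ls i, w_sync ls' i = w_sync ls i &
          forall p, p != i -> out_wbits p out =
            if (p == j) && ((w_sync ls j).+1 < w_sync ls i)
            then [:: (w_sync ls j).+2 %% 2] else [::]]]].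
Proof.
move=> ji le ls' out; rewrite /ls' /out /exec_write.
have ij : (i == j) = false by rewrite eq_sym (negbTE ji).
case: ifP => [/eqP/succn_inj E|E1]; last case: ifP => E2.
- rewrite /= /upd !eqxx ij; split=> //.
  + by move=> q qi qj; rewrite (negbTE qi) (negbTE qj).
  + constructor 1; split; rewrite ?E // => p pi.
    by rewrite out_wbits_bcast /= (negbTE pi).
- rewrite /= /upd !eqxx ij; split=> //.
  + by move=> q qi qj; rewrite (negbTE qj).
  + constructor 2; split=> //; first exact: ltnW.
    move=> p pi; rewrite /out_wbits /= andbT.
    by case: (j =P p) => [->|/eqP jp]; rewrite ?eqxx // eq_sym (negbTE jp).
- rewrite /= /upd !eqxx ij; split=> //.
  + by move=> q qi qj; rewrite (negbTE qj).
  + constructor 2; split=> //; last by move=> p _; rewrite andbF.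
    by rewrite ltn_neqAle le andbT; apply: contraFN E1 => /eqP ->.
Qed.

Lemma exec_write_out ls i j (v : V) d : j != i -> List.In d (exec_write ls i j v).2 ->
  d.1 != i /\ write_body d.2.
Proof.
move=> ji; rewrite /exec_write.
case: ifP => [/eqP E|_]; last case: ifP => _ //=.
- move=> H0; case: (In_map_inv H0) => l H1 ->; case: (In_filter_inv H1) => H _ /=.
  by split=> //; apply/eqP => li; move: H; rewrite li /upd eqxx /=; lia.
- by case=> // <- /=.
Qed.

Lemma wlink_ok_exec_write c i j hid (v : V) l1 l2 q p : Inv c -> ~~ crashed c i ->
  pending c = l1 ++ Handler hid i j (HWrite ((w_sync (loc c i) j).+1 %% 2) v) :: l2 ->
  q != p -> ~~ crashed c q ->
  wlink_ok (after_act c i (exec_write (loc c i) i j v).1 (transit c) (l1 ++ l2)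
              (exec_write (loc c i) i j v).2) q p.
Proof.
move=> Hinv ci Ep qp cq.
set h := Handler _ _ _ _ in Ep.
have ji : j != i.
  by rewrite eq_sym; apply: (inv_pending_src Hinv (h := h)); rewrite Ep; apply: List.in_elt.
have Hact : act c i (exec_write (loc c i) i j v).1 (transit c) (l1 ++ l2)
                (exec_write (loc c i) i j v).2 by apply: A_exec_write Ep _.
have [_ _ Eq Ej Hbr] := exec_write_cases v ji (inv_ws_le_own Hinv i j).
move: Hact Eq Ej Hbr.
set ls' := (exec_write _ _ _ _).1; set out := (exec_write _ _ _ _).2 => Hact Eq Ej Hbr.
set c' := after_act _ _ _ _ _ _; have Hwl := inv_wlink Hinv.
have Hwo : forall p q, p != i -> ws c' p q = ws c p q by move=> *; apply: ws_after_other.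
have Hwi : forall x, ws c' i x = w_sync ls' x by move=> ?; apply: ws_after_self.
have Hout : forall x, x != i -> pmap (fun d => msg_wbit x i (Msg (fresh c) i d.1 d.2)) out = [::].
  by move=> x xi; apply: pmap_None => d; rewrite /msg_wbit /= eq_sym (negbTE xi).
case: (q =P i) => [Eqi|/eqP qi].
- subst q; have pi : p != i by rewrite eq_sym.
  have Bs := wchan_after_sender Hact pi.
  have Epi : ws c' p i = ws c p i by apply: Hwo.
  have [[E1 E2 E3]|[E1 E2 E3]] := Hbr; rewrite (E3 p pi) in Bs.
  + apply: (wlink_ok_adopt Hinv ci pi _ _ Epi Bs); first by rewrite Hwi E2.
    case: (p =P j) => [->|/eqP pj]; last by left; rewrite Hwi Eq.
    by right; rewrite Hwi Ej E1.
  + case: (p =P j) => [Epj|/eqP pj].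
    * subst p; rewrite eqxx /= in Bs.
      by apply: wlink_ok_ack Hinv ci ji _ _ E1 Epi Bs; rewrite Hwi ?E2 ?Ej.
    * rewrite (negbTE pj) cats0 in Bs.
      by apply: wlink_ok_transfer Epi _ Bs (Hwl _ _ qp ci); rewrite Hwi ?E2 ?Eq.
- case: (p =P i) => [Epi|/eqP pi].
  + subst p; case: (q =P j) => [Eqj|/eqP qj].
    * subst q; apply: wlink_ok_deliver (Hwl _ _ qp cq); rewrite ?Hwi ?Ej ?Hwo //.
      rewrite /wchan /= Ep !pmap_cat /mk_out pmap_map Hout // /handler_wbit /= !eqxx cats0 /=.
      by rewrite /ws; apply/permP => x; rewrite !count_cat /= !count_cat; lia.
    * apply: wlink_ok_transfer (Hwl _ _ qp cq); rewrite ?Hwi ?Eq ?Hwo //.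
      rewrite /wchan /= Ep !pmap_cat /mk_out pmap_map Hout //.
      by rewrite /handler_wbit /= eq_sym (negbTE qj) andbF cats0.
  + apply: wlink_ok_transfer (Hwl _ _ qp cq); rewrite ?Hwo //.
    by rewrite (wchan_after_other Hact).
Qed.

Lemma inv_exec_write c i j hid (v : V) l1 l2 : Inv c -> ~~ crashed c i ->
  pending c = l1 ++ Handler hid i j (HWrite ((w_sync (loc c i) j).+1 %% 2) v) :: l2 ->
  Inv (after_act c i (exec_write (loc c i) i j v).1 (transit c) (l1 ++ l2)
          (exec_write (loc c i) i j v).2).
Proof.
move=> Hinv ci Ep; set h := Handler _ _ _ _ in Ep.
have ji : j != i.
  by rewrite eq_sym; apply: (inv_pending_src Hinv (h := h)); rewrite Ep; apply: List.in_elt.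
have [Er Eo Eq Ej Hbr] := exec_write_cases v ji (inv_ws_le_own Hinv i j).
have Hown : ws c i i <= w_sync (exec_write (loc c i) i j v).1 i by case: Hbr => -[] _ ->.
apply: inv_write_step => //.
- by right; exists l1, h, l2; split=> //; rewrite /h /=; do 2!eexists.
- by move=> d; apply: exec_write_out.
- move=> q; case: (q =P i) => [->//|/eqP qi]; case: (q =P j) => [->|/eqP qj].
    by rewrite Ej; case: Hbr => -[E -> _]; rewrite ?E.
  by rewrite Eq //; apply: leq_trans (inv_ws_le_own Hinv i q) Hown.
- by move=> rsn; rewrite Eo.
- by move=> sn; rewrite Eo.
- by move=> q p qp cq; apply: (wlink_ok_exec_write Hinv ci Ep qp cq).
Qed.

Lemma inv_invoke_write c (v : V) : Inv c -> ~~ crashed c w -> op (loc c w) = Idle ->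
  let ls := loc c w in
  let wsn := (w_sync ls w).+1 in
  let ws' := upd (w_sync ls) w wsn in
  Inv (after_act c w (LState (updh (history ls) wsn v) ws' (r_sync ls) (WWait wsn))
          (transit c) (pending c)
          [seq (j, MWrite (wsn %% 2) v) | j <- enum 'I_n & ws' j == wsn.-1]).
Proof.
move=> Hinv cw Eop ls wsn ws'.
have Hact := A_invoke_write t v Eop; rewrite -/ls -/wsn -/ws' in Hact.
move: Hact; set ls' := LState _ _ _ _; set out := [seq _ | j <- _ & _] => Hact.
set c' := after_act _ _ _ _ _ _.
have Ew'w : ws' w = (ws c w w).+1 by rewrite /ws' /upd eqxx.
have Ew'o : forall q, q != w -> ws' q = ws c w q by move=> q qw; rewrite /ws' /upd (negbTE qw).
apply: inv_write_step => //.
- by left.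
- move=> d Hd; case: (In_map_inv Hd) => l Hl ->; case: (In_filter_inv Hl) => H _.
  by split=> //=; apply/eqP => lw; move: H; rewrite lw Ew'w /wsn /ls /ws /=; lia.
- move=> q; rewrite /= Ew'w; case: (q =P w) => [->|/eqP qw]; first by rewrite Ew'w.
  by rewrite Ew'o // ltnW // ltnS (inv_ws_le_own Hinv).
- by rewrite /= Ew'w.
move=> q p qp cq; have Hwl := inv_wlink Hinv.
case: (q =P w) => [Eqw|/eqP qw].
- subst q; have pw : p != w by rewrite eq_sym.
  have Bs := wchan_after_sender Hact pw.
  have Ob : out_wbits p out = if ws c w p == ws c w w then [:: (ws c w w).+1 %% 2] else [::].
    by rewrite /out out_wbits_bcast /= /ws' /upd (negbTE pw).
  rewrite Ob in Bs.
  apply: (wlink_ok_adopt Hinv cw pw _ _ _ Bs); rewrite ?ws_after_self ?ws_after_other //.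
  by left; rewrite /= /upd (negbTE pw).
- have Hch : wchan c' q p = wchan c q p.
    rewrite /wchan /= pmap_cat /mk_out pmap_map (@pmap_None _ _ _ out) ?cats0 //.
    by move=> d; rewrite /msg_wbit /= eq_sym (negbTE qw).
  have Ewp : ws c' p q = ws c p q.
    case: (p =P w) => [->|/eqP pw]; last by rewrite ws_after_other.
    by rewrite ws_after_self; apply: Ew'o.
  by apply: wlink_ok_transfer _ Ewp _ _ (Hwl _ _ qp cq); rewrite ?Hch // ws_after_other.
Qed.

Lemma inv_act c i ls' tr' pd' out : Inv c -> act c i ls' tr' pd' out -> ~~ crashed c i ->
  Inv (after_act c i ls' tr' pd' out).
Proof.
move=> H; case.
- by move=> v Eop ls wsn ws' cw; apply: inv_invoke_write.
- by move=> i0 wsn ls Eop _ _; apply: inv_local.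
- by move=> i0 ls Eop rsn _; apply: inv_invoke_read.
- by move=> i0 rsn ls Eop _ _; apply: inv_local => // sn [<-].
- by move=> i0 sn ls Eop _ _; apply: inv_local.
- by move=> i0 m l1 l2 Et Ed _; apply: inv_receive.
- by move=> i0 j hid b v l1 l2 Ep Eb ci; subst b; exact: inv_exec_write H ci Ep.
- by move=> i0 j hid sn l1 l2 Ep _ _; apply: inv_exec_read Ep.
- by move=> i0 j hid l1 l2 Ep ls _; apply: inv_exec_proceed Ep.
Qed.

Lemma pmap_filter_src (U : Type) (f : msg -> option U) i s :
  (forall m, m_src m = i -> f m = None) -> pmap f s = pmap f [seq m <- s | m_src m != i].
Proof. by move=> H; elim: s => //= m s ->; case: (m_src m =P i) => [/H ->|_] //=. Qed.

Lemma count_filter_src (P : pred msg) i s :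
  (forall m, m_src m = i -> ~~ P m) -> count P s = count P [seq m <- s | m_src m != i].
Proof.
by move=> H; elim: s => //= m s IH; case: (m_src m =P i) => [/H /negbTE ->|_] /=; rewrite IH.
Qed.

(* A crash of i may drop any in-flight message sent by i, and only those. *)
Lemma inv_crash c i T' : Inv c ->
  (forall m, List.In m T' -> List.In m (transit c)) ->
  [seq m <- T' | m_src m != i] = [seq m <- transit c | m_src m != i] ->
  Inv (Config (loc c) (upd (crashed c) i true) T' (pending c) (fresh c)).
Proof.
move=> [] NT NP IV IW IR IHR O1 O2 Hsub Hflt.
set c' := Config _ _ _ _ _.
have Hcr : forall q, ~~ crashed c' q -> q != i /\ ~~ crashed c q.
  by move=> q; rewrite /c' /= /upd; case: eqP.
have Hch : forall q p, q != i -> wchan c' q p = wchan c q p.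
  move=> q p qi; have Hq : forall m : msg, m_src m = i -> msg_wbit q p m = None.
    by move=> m E; rewrite /msg_wbit E eq_sym (negbTE qi).
  by rewrite /wchan /= (pmap_filter_src T' Hq) Hflt -(pmap_filter_src (transit c) Hq).
have Ews : ws c' = ws c by [].
split=> //.
- by move=> m /Hsub; apply: NT.
- move=> q p qp /Hcr [qi cq]; apply: wlink_ok_perm Ews _ (IW _ _ qp cq).
  by rewrite Hch.
- move=> a b ab /Hcr [ai ca] /Hcr [bi cb]; change (read_tokens c' a b = rs c a a).
  rewrite -(IR a b ab ca cb) /read_tokens /=.
  have Hb : forall m : msg, m_src m = i -> ~~ proceed_msg b a m.
    by move=> m E; rewrite /proceed_msg E eq_sym (negbTE bi).
  have Ha : forall m : msg, m_src m = i -> ~~ read_msg a b m.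
    by move=> m E; rewrite /read_msg E eq_sym (negbTE ai).
  rewrite (count_filter_src T' Hb) Hflt -(count_filter_src (transit c) Hb).
  by rewrite (count_filter_src T' Ha) Hflt -(count_filter_src (transit c) Ha).
Qed.

Lemma mk_out_src c i out : [seq m <- mk_out c i out | m_src m != i] = [::].
Proof. by elim: out => //= d out IH; rewrite eqxx. Qed.

Lemma inv_step c c' : Inv c -> step c c' -> Inv c'.
Proof.
move=> H; case.
- by move=> i ls' tr' pd' out ci A ->; apply: inv_act.
- move=> i ls' tr' pd' out msk ci A ->.
  apply: inv_crash (inv_act H A ci) _ _ => /=.
  + move=> m Hm; apply: List.in_or_app; case: (In_cat_inv Hm) => {}Hm; first by left.
    by right; move: Hm; rewrite /mk_out map_mask; apply: In_mask.
  + by rewrite !filter_cat !mk_out_src.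
- by move=> i ci ->; apply: inv_crash.
Qed.

(** * Effects of single steps *)

Lemma act_sync_mono c i (ls' : lstate V n) (tr' : seq msg) (pd' : seq handler)
    (out : seq ('I_n * body V)) q : act c i ls' tr' pd' out ->
  w_sync (loc c i) q <= w_sync ls' q /\ r_sync (loc c i) q <= r_sync ls' q.
Proof.
case=> /=.
- by move=> v *; rewrite /upd; case: (q =P w) => [->|_] /=.
- by [].
- by move=> i0 *; rewrite /upd; case: (q =P i0) => [->|_] /=.
- by [].
- by [].
- by [].
- move=> i0 j *; rewrite /exec_write.
  case: ifP => [/eqP E|_]; last case: ifP => _; rewrite /= /upd; split=> //.
  + by case: (q =P j) => [->|_] /=; [lia | case: (q =P i0) => [->|_] /=; lia].
  + by case: (q =P j) => [->|_] /=.
  + by case: (q =P j) => [->|_] /=.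
- by [].
- by move=> i0 j *; rewrite /upd; case: (q =P j) => [->|_] /=.
Qed.

Lemma step_sync_mono (c c' : config) p q : step c c' ->
  ws c p q <= ws c' p q /\ rs c p q <= rs c' p q.
Proof.
case=> [i ls' tr' pd' out _ A ->|i ls' tr' pd' out msk _ A ->|i _ ->] //;
  rewrite /ws /rs /upd /=; case: eqP => [->|//]; exact: act_sync_mono A.
Qed.

Lemma step_crashed_mono (c c' : config) p : step c c' -> crashed c p -> crashed c' p.
Proof. by case=> [*|*|*]; subst c' => //=; rewrite /upd; case: eqP. Qed.

Lemma act_receives c i (ls' : lstate V n) (tr' : seq msg) (pd' : seq handler)
    (out : seq ('I_n * body V)) m :
  act c i ls' tr' pd' out -> List.In m (transit c) -> ~ List.In m tr' ->
  exists ls, List.In (Handler (m_id m) (m_dst m) (m_src m) (kind_of ls (m_dst m) (m_body m))) pd'.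
Proof.
case; try by move=> *; exfalso; auto.
move=> i0 m0 l1 l2 Et Ed H1 H2; rewrite Et in H1.
have E := In_cat_cons_removed H1 H2; subst m0.
by exists (loc c i0); rewrite Ed; apply: List.in_or_app; right; left.
Qed.

Lemma step_receives (c c' : config) m : step c c' ->
  List.In m (transit c) -> ~ List.In m (transit c') ->
  exists ls, List.In (Handler (m_id m) (m_dst m) (m_src m) (kind_of ls (m_dst m) (m_body m)))
                     (pending c').
Proof.
case=> [i ls' tr' pd' out _ A ->|i ls' tr' pd' out msk _ A ->|i _ -> H1 H2] /=; last by case: H2.
- by move=> H1 H2; apply: (act_receives A H1) => H; apply/H2/List.in_or_app; left.
- by move=> H1 H2; apply: (act_receives A H1) => H; apply/H2/List.in_or_app; left.
Qed.

Definition handler_effect (c c' : config) (h : handler) : Prop :=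
  match h_kind h with
  | HWrite _ _ => ws c' (h_owner h) (h_from h) = (ws c (h_owner h) (h_from h)).+1
  | HRead _ => exists2 m, List.In m (transit c') &
      [/\ m_src m = h_owner h, m_dst m = h_from h & m_body m = MProceed V]
  | HProceed => rs c' (h_owner h) (h_from h) = (rs c (h_owner h) (h_from h)).+1
  end.

Lemma act_executes c i (ls' : lstate V n) (tr' : seq msg) (pd' : seq handler)
    (out : seq ('I_n * body V)) h :
  act c i ls' tr' pd' out -> List.In h (pending c) -> ~ List.In h pd' ->
  h_owner h = i /\
  match h_kind h with
  | HWrite _ _ => w_sync ls' (h_from h) = (w_sync (loc c i) (h_from h)).+1
  | HRead _ => List.In (h_from h, MProceed V) out
  | HProceed => r_sync ls' (h_from h) = (r_sync (loc c i) (h_from h)).+1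
  end.
Proof.
case; try (by move=> *; exfalso; auto).
- by move=> i0 m l1 l2 Et Ed H1 H2; case: H2; apply: List.in_or_app; left.
- move=> i0 j hid b v l1 l2 Ep _ H1 H2; rewrite Ep in H1.
  have E := In_cat_cons_removed H1 H2; subst h; split=> //=; rewrite /exec_write.
  by case: ifP => [/eqP E|_]; last case: ifP => _ /=; rewrite /upd /= eqxx.
- move=> i0 j hid sn l1 l2 Ep _ H1 H2; rewrite Ep in H1.
  by have E := In_cat_cons_removed H1 H2; subst h; split=> //=; left.
- move=> i0 j hid l1 l2 Ep ls H1 H2; rewrite Ep in H1.
  by have E := In_cat_cons_removed H1 H2; subst h; split=> //=; rewrite /upd /= eqxx.
Qed.

Lemma step_executes (c c' : config) h : step c c' ->
  List.In h (pending c) -> ~ List.In h (pending c') -> ~~ crashed c' (h_owner h) ->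
  handler_effect c c' h.
Proof.
case=> [i ls' tr' pd' out _ A ->|i ls' tr' pd' out msk _ A ->|i _ -> H1 H2] /=; last by case: H2.
- move=> H1 H2 _; have [Eo E] := act_executes A H1 H2.
  rewrite /handler_effect; move: E; case: (h_kind h) => [b v|sn|].
  + by rewrite /ws /upd /= Eo eqxx.
  + move=> Hin; exists (Msg (fresh c) i (h_from h) (MProceed V)) => //.
    by apply: List.in_or_app; right; apply: (In_map _ Hin).
  + by rewrite /rs /upd /= Eo eqxx.
- by move=> H1 H2; have [-> _] := act_executes A H1 H2; rewrite /upd eqxx.
Qed.

Definition reading (o : opstate) :=
  match o with RWait1 _ | RWait2 _ => true | _ => false end.

Lemma act_op c i (ls' : lstate V n) (tr' : seq msg) (pd' : seq handler)
    (out : seq ('I_n * body V)) : act c i ls' tr' pd' out ->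
  [\/ op ls' = op (loc c i), op ls' = Idle, ~~ reading (op (loc c i)) |
      exists rsn sn, op (loc c i) = RWait1 rsn /\ op ls' = RWait2 sn].
Proof.
case=> /=.
- by move=> v -> *; constructor 3.
- by move=> i0 wsn -> *; constructor 3.
- by move=> i0 -> *; constructor 3.
- by move=> i0 rsn E *; constructor 4; exists rsn, (w_sync (loc c i0) i0).
- by move=> *; constructor 2.
- by move=> *; constructor 1.
- move=> *; constructor 1.
  by rewrite /exec_write; case: ifP => _ //; case: ifP.
- by move=> *; constructor 1.
- by move=> *; constructor 1.
Qed.

Lemma step_op (c c' : config) i : step c c' ->
  [\/ op (loc c' i) = op (loc c i), op (loc c' i) = Idle, ~~ reading (op (loc c i)) |
      exists rsn sn, op (loc c i) = RWait1 rsn /\ op (loc c' i) = RWait2 sn].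
Proof.
case=> [j ls' tr' pd' out _ A ->|j ls' tr' pd' out msk _ A ->|j _ ->] /=; try by constructor 1.
- by rewrite /upd; case: eqP => [->|_]; [exact: act_op A | constructor 1].
- by rewrite /upd; case: eqP => [->|_]; [exact: act_op A | constructor 1].
Qed.

End Invariant.

(** * Liveness of reads *)

Section Run.
Variables (V : Type) (n t : nat) (w : 'I_n) (v0 : V) (r : nat -> config V n).
Local Notation msg := (msg V n).
Local Notation handler := (handler V n).
Implicit Types (p q i j : 'I_n) (m : msg) (h : handler).
Hypothesis Hrun : is_run t w v0 r.
Hypothesis Hfair : fair t r.
Hypothesis Hcrash : at_most_t_crash t r.

Lemma run_step k : step t w (r k) (r k.+1) \/ r k.+1 = r k.
Proof. by case: Hrun => _; apply. Qed.

Lemma run_inv k : Inv (r k).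
Proof.
elim: k => [|k IH]; first by case: Hrun => -> _; apply: inv_init.
by case: (run_step k) => [S|->] //; apply: inv_step S.
Qed.

Lemma ws_mono p q : {homo (fun k => ws (r k) p q) : k k' / k <= k'}.
Proof.
apply: homo_leq leqnn leq_trans _ => k.
by case: (run_step k) => [/(step_sync_mono p q) []|->].
Qed.

Lemma rs_mono p q : {homo (fun k => rs (r k) p q) : k k' / k <= k'}.
Proof.
apply: homo_leq leqnn leq_trans _ => k.
by case: (run_step k) => [/(step_sync_mono p q) []|->].
Qed.

Lemma crashed_mono p k k' : k <= k' -> crashed (r k) p -> crashed (r k') p.
Proof.
move=> le Hk; elim: k' le => [|k' IH]; first by rewrite leqn0 => /eqP <-.
rewrite leq_eqVlt => /orP [/eqP <-//|/IH Hk'].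
by case: (run_step k') => [S|->] //; apply: step_crashed_mono S Hk'.
Qed.

Lemma msg_delivered k m : List.In m (transit (r k)) -> correct r (m_dst m) ->
  exists k' ls, k <= k' /\
    List.In (Handler (m_id m) (m_dst m) (m_src m) (kind_of ls (m_dst m) (m_body m))) (pending (r k')).
Proof.
move=> Hm Hc; have [k2 le2 nIn] := Hfair.1 _ _ Hm Hc.
have [k'' /andP [a _] [c d]] := last_before (P := fun x => List.In m (transit (r x))) le2 Hm nIn.
case: (run_step k'') => [S|E]; last by rewrite E in d.
by have [ls H] := step_receives S c d; exists k''.+1, ls; split=> //; apply: leqW.
Qed.

Lemma handler_executed k h : List.In h (pending (r k)) -> correct r (h_owner h) ->
  (exists k0, forall k', k0 <= k' -> List.In h (pending (r k')) -> h_enabled (r k') h) ->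
  exists2 k', k <= k' & handler_effect (r k') (r k'.+1) h.
Proof.
move=> Hh Hc [k0 Hen]; have [_ [Fh _]] := Hfair.
have [k2 le2 nIn] : exists2 k2, maxn k k0 <= k2 & ~ List.In h (pending (r k2)).
  apply: NNPP => H; apply: (Fh (maxn k k0) h Hc) => k' le'.
  have Hin : List.In h (pending (r k')) by apply: NNPP => H2; apply: H; exists k'.
  by split=> //; apply: Hen => //; apply: leq_trans le'; apply: leq_maxr.
have lek : k <= k2 by apply: leq_trans le2; apply: leq_maxl.
have [k'' /andP [a _] [c d]] := last_before (P := fun x => List.In h (pending (r x))) lek Hh nIn.
case: (run_step k'') => [S|E]; last by rewrite E in d.
by exists k'' => //; apply: step_executes S c d _; apply: Hc.
Qed.

Lemma msg_wbit_Some q p m x : msg_wbit q p m = Some x ->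
  [/\ m_src m = q, m_dst m = p & exists v, m_body m = MWrite x v].
Proof.
rewrite /msg_wbit; case: (m_src m =P q) => // -> ; case: (m_dst m =P p) => // -> /=.
by case: (m_body m) => // b v [<-]; split=> //; exists v.
Qed.

Lemma handler_wbit_Some q p (h : handler) x : handler_wbit q p h = Some x ->
  [/\ h_owner h = p, h_from h = q & exists v, h_kind h = HWrite x v].
Proof.
rewrite /handler_wbit; case: (h_owner h =P p) => // -> ; case: (h_from h =P q) => // -> /=.
by case: (h_kind h) => // b v [<-]; split=> //; exists v.
Qed.

(* The bit expected next by p is on the link, and its handler stays enabled
   as long as p does not advance. *)
Lemma write_progress p q T : q != p -> correct r p -> correct r q ->
  0 < size (wchan (r T) q p) -> exists2 T', T <= T' & ws (r T) p q < ws (r T') p q.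
Proof.
move=> qp cp cq sz; set v := ws (r T) p q.
apply: NNPP => Hno.
have Hv : forall T', T <= T' -> ws (r T') p q = v.
  move=> T' le; apply/eqP; rewrite eqn_leq (ws_mono p q le) andbT leqNgt.
  by apply/negP => H; apply: Hno; exists T'.
have [_ _ _ B] := inv_wlink (run_inv T) qp (cq T).
have Hmem : v.+1 %% 2 \in wchan (r T) q p.
  by rewrite (perm_mem B); move: sz; case: (size _) => //= s _; rewrite in_cons eqxx.
have stuck : forall T1 (h : handler) x, T <= T1 -> List.In h (pending (r T1)) ->
    h_owner h = p -> h_from h = q -> h_kind h = HWrite (v.+1 %% 2) x -> False.
  move=> T1 h x le Hh Eo Ef Ek.
  have [k' le' Heff] : exists2 k', T1 <= k' & handler_effect (r k') (r k'.+1) h.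
    apply: handler_executed => //; first by rewrite Eo.
    exists T1 => k' le2 _; rewrite /h_enabled Ek Eo Ef.
    by rewrite -/(ws (r k') p q) Hv ?(leq_trans le).
  have le'' : T <= k' := leq_trans le le'.
  have E1 := Hv _ le''; have E2 := Hv _ (leqW le'').
  by move: Heff; rewrite /handler_effect Ek Eo Ef E2 E1 => /n_Sn.
move: Hmem; rewrite /wchan mem_cat => /orP [] /mem_pmap_In [y Hy E].
- have [Es Ed [x Eb]] := msg_wbit_Some E.
  have cd : correct r (m_dst y) by rewrite Ed.
  have [T1 [ls [le H1]]] := msg_delivered Hy cd.
  by apply: (stuck T1 _ x le H1) => //=; rewrite Eb.
- have [Eo Ef [x Ek]] := handler_wbit_Some E.
  exact: (stuck T _ x (leqnn _) Hy Eo Ef Ek).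
Qed.

Lemma ws_advances p q T : q != p -> correct r p -> correct r q ->
  ws (r T) p q < ws (r T) p p -> exists T', ws (r T) p q < ws (r T') p q.
Proof.
move=> qp cp cq lt; have pq : p != q by rewrite eq_sym.
apply: NNPP => Hno; set v := ws (r T) p q.
have Hv : forall T', T <= T' -> ws (r T') p q = v.
  move=> T' le; apply/eqP; rewrite eqn_leq (ws_mono p q le) andbT leqNgt.
  by apply/negP => H; apply: Hno; exists T'.
have [T1 le1 H1] : exists2 T1, T <= T1 & v < ws (r T1) q p.
  apply: (reach_by_progress (x := v.+1) (ws_mono q p)) => T' le /= H.
  have [_ _ D _] := inv_wlink (run_inv T') pq (cp T').
  have lt' : ws (r T') p q < ws (r T') p p.
    by rewrite Hv //; apply: leq_trans lt (ws_mono p p le).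
  have sz : 0 < size (wchan (r T') p q) by move: (D lt'); rewrite /wsent Hv //; lia.
  by have [T'' _ gt] := write_progress pq cq cp sz; exists T''.
have [_ L _ _] := inv_wlink (run_inv T1) qp (cq T1).
have sz : 0 < size (wchan (r T1) q p) by move: L; rewrite /wsent Hv //; lia.
have [T2 le2 gt] := write_progress qp cp cq sz.
by move: gt; rewrite (Hv _ le1) (Hv _ (leq_trans le1 le2)) ltnn.
Qed.

Lemma ws_reaches p q x T : q != p -> correct r p -> correct r q ->
  x <= ws (r T) p p -> exists T', x <= ws (r T') p q.
Proof.
move=> qp cp cq le.
have [T' _ H] := reach_by_progress (x := x) (T0 := T) (ws_mono p q)
  (fun T' le' lt => ws_advances qp cp cq (leq_trans lt (leq_trans le (ws_mono p p le')))).
by exists T'.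
Qed.

Lemma proceed_handler_progress T h i j : List.In h (pending (r T)) -> proceed_handler i j h ->
  correct r i -> exists T', rs (r T) i j < rs (r T') i j.
Proof.
move=> Hh /and3P [/eqP Eo /eqP Ef Ek] ci.
case E: (h_kind h) Ek => // _.
have [k' le' Heff] : exists2 k', T <= k' & handler_effect (r k') (r k'.+1) h.
  apply: handler_executed => //; first by rewrite Eo.
  by exists 0 => k' _ _; rewrite /h_enabled E.
exists k'.+1; move: Heff; rewrite /handler_effect E Eo Ef => ->.
by rewrite ltnS; apply: rs_mono.
Qed.

Lemma proceed_msg_progress T m i j : List.In m (transit (r T)) -> proceed_msg j i m ->
  correct r i -> exists T', rs (r T) i j < rs (r T') i j.
Proof.
move=> Hm /and3P [/eqP Es /eqP Ed Eb] ci.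
have cd : correct r (m_dst m) by rewrite Ed.
have [T1 [ls [le H1]]] := msg_delivered Hm cd.
case E: (m_body m) Eb H1 => // _ H1.
have Hp : proceed_handler i j (Handler (m_id m) i j (kind_of ls i (MProceed V))).
  by rewrite /proceed_handler /= !eqxx.
rewrite Ed Es in H1; have [T' gt] := proceed_handler_progress H1 Hp ci.
by exists T'; apply: leq_trans gt; rewrite ltnS; apply: rs_mono.
Qed.

Lemma read_handler_progress T h i j : List.In h (pending (r T)) -> read_handler j i h ->
  i != j -> correct r i -> correct r j -> exists T', rs (r T) i j < rs (r T') i j.
Proof.
move=> Hh /and3P [/eqP Eo /eqP Ef Ek] ij ci cj.
case E: (h_kind h) Ek => [b v|sn|] // _.
have Hsn : sn <= ws (r T) j j by rewrite -Eo; exact: inv_hread_sn (run_inv T) _ _ Hh E.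
have [T0 H0] := ws_reaches ij cj ci Hsn.
have [k' le' Heff] : exists2 k', T <= k' & handler_effect (r k') (r k'.+1) h.
  apply: handler_executed => //; first by rewrite Eo.
  exists T0 => k' le _; rewrite /h_enabled E Eo Ef.
  by apply: leq_trans H0 (ws_mono j i le).
move: Heff; rewrite /handler_effect E Eo Ef => -[m Hm [Es Ed Eb]].
have Hp : proceed_msg j i m by rewrite /proceed_msg Es Ed Eb !eqxx.
have [T' gt] := proceed_msg_progress Hm Hp ci.
by exists T'; apply: leq_trans gt; rewrite ltnS; apply: rs_mono (leq_trans le' (leqnSn _)).
Qed.

Lemma read_msg_progress T m i j : List.In m (transit (r T)) -> read_msg i j m ->
  i != j -> correct r i -> correct r j -> exists T', rs (r T) i j < rs (r T') i j.
Proof.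
move=> Hm /and3P [/eqP Es /eqP Ed Eb] ij ci cj.
have cd : correct r (m_dst m) by rewrite Ed.
have [T1 [ls [le H1]]] := msg_delivered Hm cd.
case E: (m_body m) Eb H1 => // _ H1.
have Hr : read_handler j i (Handler (m_id m) j i (kind_of ls j (MRead V))).
  by rewrite /read_handler /= !eqxx.
rewrite Ed Es in H1; have [T' gt] := read_handler_progress H1 Hr ij ci cj.
by exists T'; apply: leq_trans gt; rewrite ltnS; apply: rs_mono.
Qed.

Lemma rs_advances T i j : i != j -> correct r i -> correct r j ->
  rs (r T) i j < rs (r T) i i -> exists T', rs (r T) i j < rs (r T') i j.
Proof.
move=> ij ci cj lt; have := inv_read_tokens (run_inv T) ij (ci T) (cj T).
rewrite /read_tokens => HR.
have : [|| 0 < count (proceed_msg j i) (transit (r T)), 0 < count (proceed_handler i j) (pending (r T)),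
          0 < count (read_msg i j) (transit (r T)) | 0 < count (read_handler j i) (pending (r T))].
  by move: lt; rewrite -HR; lia.
case/or4P => H; case: (count_gt0_In H) => x Hx Px.
- exact: proceed_msg_progress Hx Px ci.
- exact: proceed_handler_progress Hx Px ci.
- exact: read_msg_progress Hx Px ij ci cj.
- exact: read_handler_progress Hx Px ij ci cj.
Qed.

Lemma crashes_if_not_correct j : ~ correct r j -> exists k, crashed (r k) j.
Proof. by move=> nc; apply: NNPP => H; apply: nc => k; apply/negP => Hk; apply: H; exists k. Qed.

Lemma correct_quorum : exists2 C : {set 'I_n}, n - t <= #|C| & forall j, j \in C -> correct r j.
Proof.
have [K HK] : exists K, forall j k, K <= k -> ~ correct r j -> crashed (r k) j.
  apply: eventually_forall_fin => j; case: (classic (correct r j)) => [cj|ncj].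
    by exists 0 => k _ /(_ cj).
  have [k0 Hk0] := crashes_if_not_correct ncj.
  by exists k0 => k le _; exact (crashed_mono le Hk0).
exists [set j | ~~ crashed (r K) j].
  have := cardsC [set j | crashed (r K) j]; have := Hcrash K.
  rewrite card_ord (_ : ~: _ = [set j | ~~ crashed (r K) j]).
    by move=> H1 H2; rewrite -{1}H2 leq_subLR leq_add2r.
  by apply/setP => j; rewrite !inE.
move=> j; rewrite inE => Hj; apply: NNPP => /(HK j K (leqnn _)).
by rewrite (negbTE Hj).
Qed.

Lemma quorum_eventually (P : nat -> 'I_n -> bool) :
  (forall j, correct r j -> exists K, forall k, K <= k -> P k j) ->
  exists K, forall k, K <= k -> n - t <= #|[set j | P k j]|.
Proof.
move=> HP; have [C HC Ccor] := correct_quorum.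
have [K HK] : exists K, forall j k, K <= k -> j \in C -> P k j.
  apply: eventually_forall_fin => j; case: (boolP (j \in C)) => [jC|jC].
    by have [K HK] := HP j (Ccor j jC); exists K => k le _; apply: HK.
  by exists 0.
exists K => k le; apply: leq_trans HC _; apply: subset_leq_card.
by apply/subsetP => j Hj; rewrite inE; apply: HK.
Qed.

Lemma stuck_op_disabled i o K : correct r i ->
  (forall k, K <= k -> op (loc (r k) i) = o) ->
  ~ (exists K', forall k, K' <= k -> op_enabled t (loc (r k) i)).
Proof.
move=> ci Ho [K' HK']; apply: (Hfair.2.2 (maxn K K') i ci) => k le.
have leK : K <= k := leq_trans (leq_maxl _ _) le.
rewrite (Ho k leK) (Ho k.+1 (leqW leK)); split=> //.
exact: HK' (leq_trans (leq_maxr _ _) le).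
Qed.

Lemma rwait2_enabled i sn K : correct r i ->
  (forall k, K <= k -> op (loc (r k) i) = RWait2 sn) ->
  exists K', forall k, K' <= k -> op_enabled t (loc (r k) i).
Proof.
move=> ci Ho; have snK : sn <= ws (r K) i i := inv_rwait2 (run_inv K) (Ho K (leqnn _)).
suff [K1 HK1] : exists K1, forall k, K1 <= k -> n - t <= #|[set j | sn <= ws (r k) i j]|.
  exists (maxn K K1) => k le; rewrite /op_enabled (Ho k (leq_trans (leq_maxl _ _) le)).
  exact: HK1 (leq_trans (leq_maxr _ _) le).
apply: quorum_eventually => j cj; case: (j =P i) => [->|/eqP ji].
  by exists K => k le; apply: leq_trans snK (ws_mono i i le).
have [Tj HTj] := ws_reaches ji ci cj snK.
by exists Tj => k le; apply: leq_trans HTj (ws_mono i j le).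
Qed.

(* By the token invariant [r_sync_i[j]] never overtakes [r_sync_i[i]], so once
   it reaches rsn it stays there. *)
Lemma rwait1_enabled i rsn K : correct r i ->
  (forall k, K <= k -> op (loc (r k) i) = RWait1 rsn) ->
  exists K', forall k, K' <= k -> op_enabled t (loc (r k) i).
Proof.
move=> ci Ho.
have Hii : forall k, K <= k -> rs (r k) i i = rsn.
  by move=> k le; exact (inv_rwait1 (run_inv k) (Ho k le)).
suff [K1 HK1] : exists K1, forall k, K1 <= k -> n - t <= #|[set j | rs (r k) i j == rsn]|.
  exists (maxn K K1) => k le; rewrite /op_enabled (Ho k (leq_trans (leq_maxl _ _) le)).
  exact: HK1 (leq_trans (leq_maxr _ _) le).
apply: quorum_eventually => j cj; case: (j =P i) => [->|/eqP ji]; first by exists K => k le; rewrite Hii.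
have ij : i != j by rewrite eq_sym.
have Hle : forall k, K <= k -> rs (r k) i j <= rsn.
  move=> k le; rewrite -(Hii k le) -(inv_read_tokens (run_inv k) ij (ci k) (cj k)).
  by rewrite /read_tokens; lia.
have [Tj leTj HTj] : exists2 Tj, K <= Tj & rsn <= rs (r Tj) i j.
  apply: reach_by_progress (rs_mono i j) _ => k le /= lt.
  by apply: (rs_advances ij ci cj); rewrite Hii.
exists Tj => k le; rewrite eqn_leq Hle ?(leq_trans leTj le) //.
exact: leq_trans HTj (rs_mono i j le).
Qed.

Lemma read_op_trapped i k rsn :
  op (loc (r k.+1) i) = RWait1 rsn ->
  (forall k', k < k' -> op (loc (r k') i) <> Idle) ->
  forall k', k < k' ->
    op (loc (r k') i) = RWait1 rsn \/ exists sn, op (loc (r k') i) = RWait2 sn.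
Proof.
move=> E1 NI; elim=> // k' IH; rewrite ltnS leq_eqVlt => /orP [/eqP <-|lt]; first by left.
have NI' := NI _ (leqW lt).
case: (run_step k') => [S|->]; last exact: IH.
case: (step_op i S) => [->|/NI'//|+|[rsn' [sn' [_ ->]]]].
- by case: (IH lt) => [->|[sn ->]]; [left | right; exists sn].
- by case: (IH lt) => [->|[sn ->]].
- by right; exists sn'.
Qed.

Lemma rwait2_stays i K sn :
  op (loc (r K) i) = RWait2 sn -> (forall k, K <= k -> op (loc (r k) i) <> Idle) ->
  forall k, K <= k -> op (loc (r k) i) = RWait2 sn.
Proof.
move=> EK NI; elim=> [|k IH]; first by rewrite leqn0 => /eqP <-.
rewrite leq_eqVlt => /orP [/eqP <-//|lt]; rewrite ltnS in lt; have Ek := IH lt.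
case: (run_step k) => [S|->] //.
by case: (step_op i S) => [->//|/(NI _ (leqW lt))//|+|[rsn' [sn' [+ _]]]]; rewrite Ek.
Qed.

End Run.

Theorem lemma9 (V : Type) (n t : nat) (w : 'I_n) (v0 : V) (r : nat -> config V n) :
  2 * t < n ->
  is_run t w v0 r -> at_most_t_crash t r -> fair t r ->
  forall (i : 'I_n) (k : nat),
    op (loc (r k) i) = Idle ->
    (exists rsn, op (loc (r k.+1) i) = RWait1 rsn) ->
    exists2 k', k < k' & (op (loc (r k') i) = Idle \/ crashed (r k') i).
Proof.
(* The majority assumption matters for atomicity, not for termination. *)
move=> _ Hrun Hcr Hfair i k _ [rsn E1].
case: (classic (correct r i)) => [ci|/crashes_if_not_correct [k0 Hk0]]; last first.
  exists (maxn k0 k.+1); first by rewrite leq_max leqnn orbT.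
  by right; apply: (crashed_mono Hrun (leq_maxl _ _) Hk0).
apply: NNPP => Hno.
have NI : forall k', k < k' -> op (loc (r k') i) <> Idle.
  by move=> k' lt E; apply: Hno; exists k'; auto.
have Hop := read_op_trapped Hrun E1 NI.
case: (classic (exists2 K, k < K & exists sn, op (loc (r K) i) = RWait2 sn)) => [[K lt [sn EK]]|nB].
- have stay := rwait2_stays Hrun EK (fun k' le => NI k' (leq_trans lt le)).
  exact: (stuck_op_disabled Hfair ci stay (rwait2_enabled Hrun Hfair Hcr ci stay)).
- have stay : forall k', k.+1 <= k' -> op (loc (r k') i) = RWait1 rsn.
    by move=> k' lt; case: (Hop k' lt) => // -[sn E]; case: nB; exists k' => //; exists sn.
  exact: (stuck_op_disabled Hfair ci stay (rwait1_enabled Hrun Hfair Hcr ci stay)).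
Qed.
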